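(* Consider the SR2 method (described in the context) applied to $\min_x F(x) := f(x) + \mathcal{R}(x)$, and suppose Assumptions (A1), (A3) and (A5) of the context hold. Let $\sigma_{\textup{succ}} := \max\big(2\kappa_m/(1-\eta_2),\, 1/\lambda\big)$, where $\kappa_m$ is the constant of (A3) and $\lambda$ the constant of (A5). If at some iteration $t$ the computed step satisfies $s_t \neq 0$ and $\sigma_t \geq \sigma_{\textup{succ}}$, then $s_t$ is accepted (i.e. $x_{t+1} = x_t + s_t$) and $\sigma_{t+1} \leq \sigma_t$.
   Context: Problem: $F(x) = f(x) + \mathcal{R}(x)$ with $f(x) = \frac{1}{N}\sum_{i=1}^N f_i(x)$, $f_i:\mathbb{R}^n\to\mathbb{R}$ differentiable, and $\mathcal{R}:\mathbb{R}^n \to \mathbb{R}\cup\{\pm\infty\}$. For a nonempty sample $\xi \subseteq \{1,\dots,N\}$ set $f(x,\xi) := \frac{1}{|\xi|}\sum_{j\in\xi} f_j(x)$ and $\nabla f(x,\xi) := \frac{1}{|\xi|}\sum_{j\in\xi}\nabla f_j(x)$. A function $\mathcal{R}$ is proper if it never equals $-\infty$ and is finite somewhere; it is prox-bounded if there are $x$ and $\mu>0$ with $\inf_w \{\tfrac{1}{2}\mu^{-1}\|x-w\|^2 + \mathcal{R}(w)\} > -\infty$; the supremum of such $\mu$ is its prox-boundedness threshold. SR2 algorithm: parameters $0<\eta_1\le\eta_2<1$, $0<\gamma_3\le 1<\gamma_1\le\gamma_2$, a starting point $x_0$ where $\mathcal{R}$ is finite, $\sigma_0 \ge \sigma_{\min}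 > 0$. At iteration $t$: draw a random sample $\xi_t$, set $g_t := \nabla f(x_t,\xi_t)$, $\psi(s;x_t) := f(x_t,\xi_t) + g_t^T s + \mathcal{R}(x_t+s)$, $m(s;x_t,\sigma_t) := \psi(s;x_t) + \tfrac12\sigma_t\|s\|^2$, and compute $s_t \in \operatorname{argmin}_s m(s;x_t,\sigma_t)$ (if the sample is deemed inadequate, $s_t$ is set to $0$). Compute $\Delta F_t := F(x_t) - F(x_t+s_t)$, $\Delta\psi_t := \psi(0;x_t)-\psi(s_t;x_t)$, $\rho_t := \Delta F_t/\Delta\psi_t$ (with the convention $\rho_t = 0$ when $\Delta\psi_t = +\infty$). If $\rho_t \ge \eta_1$ (a successful iteration) set $x_{t+1} = x_t + s_t$, else $x_{t+1}=x_t$. Then choose $\sigma_{t+1} \in [\max(\sigma_{\min},\gamma_3\sigma_t),\sigma_t]$ if $\rho_t\ge\eta_2$; $\sigma_{t+1}\in[\sigma_t,\gamma_1\sigma_t]$ if $\eta_1\le\rho_t<\eta_2$; $\sigma_{t+1}\in[\gamma_1\sigma_t,\gamma_2\sigma_t]$ if $\rho_t<\eta_1$. Assumptions. (A1): there is $L>0$ with $\|\nabla f(x)-\nabla f(y)\|\le L\|x-y\|$ for all $x,y$; $\mathcal{R}$ is proper and lower semicontinuous everywhere, and $s\mapsto\mathcal{R}(x_t+s)$ is prox-bounded, with threshold $\lambda_{x_t}$, for every iterate $x_t$. (A3): there is $\kappa_m>0$ such that for all $t$, $|f(x_t+s_t)-f(x_t)-g_t^Ts_t| \le \kappa_m\|s_t\|^2$;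 moreover $\mathbb{E}_\xi[f(x_t,\xi)] = f(x_t)$ and $\mathbb{E}_\xi[g_t] = \nabla f(x_t)$. (A5): there is $\lambda>0$ with $\lambda_{x_t}\ge\lambda$ for all iterates $x_t$. *)

From HB Require Import structures.
From mathcomp Require Import all_boot all_order all_algebra.
From mathcomp Require Import all_classical all_reals all_analysis.
Set Implicit Arguments. Unset Strict Implicit. Unset Printing Implicit Defensive.
Import Order.TTheory GRing.Theory Num.Theory.
Import numFieldNormedType.Exports.
Local Open Scope ring_scope.
Local Open Scope classical_set_scope.

Section SR2Defs.
Variables (R : realType) (n : nat).
Notation V := 'rV[R]_n.

Definition dotv (u v : V) : R := \sum_(i < n) u ord0 i * v ord0 i.
Definition enorm (u : V) : R := Num.sqrt (dotv u u).

Definition proper_fun (h : V -> \bar R) : Prop :=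
  (forall x, h x != -oo%E) /\ (exists x, h x \is a fin_num).

Definition prox_bounded_at (h : V -> \bar R) (x : V) (mu : R) : Prop :=
  0 < mu /\
  (-oo < ereal_inf [set ((2 * mu)^-1 * enorm (x - w) ^+ 2)%:E + h w | w in setT])%E.

Definition prox_bounded (h : V -> \bar R) : Prop :=
  exists x mu, prox_bounded_at h x mu.

Definition prox_threshold (h : V -> \bar R) : \bar R :=
  ereal_sup [set mu%:E | mu in [set mu | exists x, prox_bounded_at h x mu]].

Definition avg (N : nat) (xi : {set 'I_N}) (F : 'I_N -> R) : R :=
  (#|xi|%:R)^-1 * \sum_(j in xi) F j.
Definition avgv (N : nat) (xi : {set 'I_N}) (F : 'I_N -> V) : V :=
  (#|xi|%:R)^-1 *: \sum_(j in xi) F j.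

Definition rho_ratio (dF dpsi : \bar R) : \bar R :=
  if dpsi == +oo%E then 0%E else (dF * ((fine dpsi)^-1)%:E)%E.

End SR2Defs.

From HB Require Import structures.
From mathcomp Require Import all_boot all_order all_algebra.
From mathcomp Require Import all_classical all_reals all_analysis.
From mathcomp Require Import lra ring.
Set Implicit Arguments. Unset Strict Implicit. Unset Printing Implicit Defensive.
Import Order.TTheory GRing.Theory Num.Theory.
Import numFieldNormedType.Exports.
Local Open Scope ring_scope.
Local Open Scope classical_set_scope.

(* Minimality of s_t gives the model decrease Delta psi_t >= sigma_t/2 |s_t|^2,
   while (A3) bounds |Delta F_t - Delta psi_t| by kappa_m |s_t|^2; hence
   1 - rho_t <= 2 kappa_m / sigma_t <= 1 - eta_2, the iteration is very
   successful, and the update rule does not increase sigma. Before that one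
   checks that R stays finite along the iterates: a step to a point where
   R = +oo gives Delta psi = -oo, hence rho = 0, and is rejected. *)

Lemma ratio_ge_of_model_decrease (R : realFieldType) (eta kappa sigma q dF dpsi : R) :
  eta < 1 -> 0 < kappa -> 0 < q -> 2 * kappa / (1 - eta) <= sigma ->
  2^-1 * sigma * q <= dpsi -> `|dF - dpsi| <= kappa * q ->
  eta <= dF / dpsi.
Proof.
move=> eta_lt1 kappa_gt0 q_gt0 sigma_ge decr_ge; rewrite ler_norml => /andP[dF_ge _].
have eta_gap : 0 < 1 - eta by rewrite subr_gt0.
have {}sigma_ge : 2 * kappa <= sigma * (1 - eta) by rewrite -ler_pdivrMr.
have sigma_gt0 : 0 < sigma by nra.
have dpsi_gt0 : 0 < dpsi by have := mulr_gt0 sigma_gt0 q_gt0; lra.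
rewrite ler_pdivlMr //; nra.
Qed.

Section RowVectorNorm.
Variables (R : realType) (n : nat).
Implicit Types u : 'rV[R]_n.

Lemma dotv_ge0 u : 0 <= dotv u u.
Proof. by apply: sumr_ge0 => i _; rewrite -expr2 sqr_ge0. Qed.

Lemma dotv_gt0 u : u != 0 -> 0 < dotv u u.
Proof.
move=> u_neq0; rewrite lt0r dotv_ge0 andbT; apply: contra u_neq0 => /eqP.
move/psumr_eq0P => sq_eq0; apply/eqP/rowP => j; rewrite mxE.
have /eqP : u ord0 j * u ord0 j = 0 by apply: sq_eq0 => // i _; rewrite -expr2 sqr_ge0.
by rewrite mulf_eq0 orbb => /eqP.
Qed.

Lemma dotvr0 u : dotv u 0 = 0.
Proof. by rewrite /dotv big1 // => i _; rewrite mxE mulr0. Qed.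

Lemma enorm_sqr u : enorm u ^+ 2 = dotv u u.
Proof. by rewrite /enorm sqr_sqrtr // dotv_ge0. Qed.

End RowVectorNorm.

Lemma rho_ratio_EFin (R : realType) (a b : R) : rho_ratio a%:E b%:E = (a / b)%:E.
Proof. by []. Qed.

(* Junk values: fine -oo = 0 and 0^-1 = 0. *)
Lemma rho_ratio_Ny (R : realType) (dF : \bar R) : rho_ratio dF -oo = 0%E.
Proof. by rewrite /rho_ratio /= invr0 mule0. Qed.

Section SR2Step.
Context {R : realType} {n : nat} {Rg : 'rV[R]_n -> \bar R} {x : 'rV[R]_n}.
Hypothesis Rg_x_fin : Rg x \is a fin_num.

(* The models psi(u; x) and m(u; x, sigma) of SR2, with c = f(x, xi). *)
Definition psi_model (c : R) (g u : 'rV[R]_n) : \bar R :=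
  ((c + dotv g u)%:E + Rg (x + u))%E.

Definition reg_model (c : R) (g : 'rV[R]_n) (sigma : R) (u : 'rV[R]_n) : \bar R :=
  (psi_model c g u + (2^-1 * sigma * enorm u ^+ 2)%:E)%E.

Lemma rho_ratio_step_pinfty {c : R} {g s : 'rV[R]_n} {dF : \bar R} :
  Rg (x + s) = +oo%E -> rho_ratio dF (psi_model c g 0 - psi_model c g s) = 0%E.
Proof.
move=> Rg_xs; rewrite /psi_model Rg_xs addr0.
by case: (Rg x) Rg_x_fin => [r| |] // _; rewrite rho_ratio_Ny.
Qed.

Hypothesis Rg_neq_Ny : forall y, Rg y != -oo%E.

Lemma reg_model_le_fin_num {c sigma : R} {g s : 'rV[R]_n} :
  (reg_model c g sigma s <= reg_model c g sigma 0)%E -> Rg (x + s) \is a fin_num.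
Proof.
rewrite fin_numE Rg_neq_Ny /reg_model /psi_model addr0.
by case: (Rg (x + s)); case: (Rg x) Rg_x_fin.
Qed.

Lemma reg_model_decrease {c sigma r0 r1 : R} {g s : 'rV[R]_n} :
  Rg x = r0%:E -> Rg (x + s) = r1%:E ->
  (reg_model c g sigma s <= reg_model c g sigma 0)%E ->
  2^-1 * sigma * dotv s s <= r0 - dotv g s - r1.
Proof.
rewrite /reg_model /psi_model addr0 => -> ->.
rewrite -!EFinD lee_fin !enorm_sqr !dotvr0; lra.
Qed.

Lemma reg_model_min_very_successful {c fx fxs sigma kappa eta : R} {g s : 'rV[R]_n} :
  eta < 1 -> 0 < kappa -> s != 0 ->
  2 * kappa / (1 - eta) <= sigma ->
  `|fxs - fx - dotv g s| <= kappa * enorm s ^+ 2 ->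
  (reg_model c g sigma s <= reg_model c g sigma 0)%E ->
  (eta%:E <= rho_ratio ((fx%:E + Rg x) - (fxs%:E + Rg (x + s)))
                        (psi_model c g 0 - psi_model c g s))%E.
Proof.
move=> eta_lt1 kappa_gt0 s_neq0 sigma_ge taylor m_le.
have := reg_model_le_fin_num m_le; move: Rg_x_fin m_le.
rewrite /psi_model addr0 dotvr0.
case Rx: (Rg x) => [r0| |] // _; case Rxs: (Rg (x + s)) => [r1| |] // m_le _.
have decr := reg_model_decrease Rx Rxs m_le.
rewrite -!EFinD rho_ratio_EFin lee_fin.
apply: (ratio_ge_of_model_decrease eta_lt1 kappa_gt0 (dotv_gt0 s_neq0) sigma_ge).
  by rewrite addr0; lra.
by rewrite -enorm_sqr; congr (_ <= _): taylor; rewrite -normrN; congr `|_|; ring.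
Qed.

End SR2Step.

Theorem theorem1
  (R : realType) (n N : nat)
  (* component functions f_i and their gradients *)
  (fi : 'I_N -> 'rV[R]_n -> R) (gradfi : 'I_N -> 'rV[R]_n -> 'rV[R]_n)
  (Rg : 'rV[R]_n -> \bar R)
  (* algorithm parameters *)
  (eta1 eta2 gamma1 gamma2 gamma3 sigma_min : R)
  (* sampling distribution over subsets of {1..N} *)
  (P : {set 'I_N} -> R)
  (* iterates *)
  (x : nat -> 'rV[R]_n) (sigma : nat -> R) (xi : nat -> {set 'I_N})
  (adequate : nat -> bool) (s : nat -> 'rV[R]_n)
  (* constants of the assumptions *)
  (L kappa_m lambda : R)
  (t : nat) :
  let f := fun y => (N%:R)^-1 * \sum_(i < N) fi i y in
  let gradf := fun y => (N%:R)^-1 *: \sum_(i < N) gradfi i y in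
  let fS := fun y (S : {set 'I_N}) => avg S (fun j => fi j y) in
  let gS := fun y (S : {set 'I_N}) => avgv S (fun j => gradfi j y) in
  let F := fun y => ((f y)%:E + Rg y)%E in
  let g := fun k => gS (x k) (xi k) in
  let psi := fun k (u : 'rV[R]_n) => ((fS (x k) (xi k) + dotv (g k) u)%:E + Rg (x k + u)%R)%E in
  let m := fun k (u : 'rV[R]_n) => (psi k u + (2^-1 * sigma k * enorm u ^+ 2)%:E)%E in
  let dF := fun k => (F (x k) - F (x k + s k)%R)%E in
  let dpsi := fun k => (psi k 0%R - psi k (s k))%E in
  let rho := fun k => rho_ratio (dF k) (dpsi k) in
  (0 < N)%N ->
  (* f_i differentiable with gradient gradfi *)
  (forall i y, differentiable (fi i) y /\
      forall v, 'd (fi i) y v = dotv (gradfi i y) v) ->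
  (* parameters *)
  0 < eta1 -> eta1 <= eta2 -> eta2 < 1 ->
  0 < gamma3 -> gamma3 <= 1 -> 1 < gamma1 -> gamma1 <= gamma2 ->
  0 < sigma_min -> sigma_min <= sigma 0%N ->
  Rg (x 0%N) \is a fin_num ->
  (* sampling: a probability distribution on nonempty samples *)
  (forall S, 0 <= P S) -> \sum_S P S = 1 -> P (finset.set0 (T:='I_N)) = 0 ->
  (forall k, 0 < P (xi k)) ->
  (* step computation *)
  (forall k, adequate k -> forall u, (m k (s k) <= m k u)%E) ->
  (forall k, ~~ adequate k -> s k = 0) ->
  (* acceptance rule *)
  (forall k, (eta1%:E <= rho k)%E -> x k.+1 = x k + s k) ->
  (forall k, (rho k < eta1%:E)%E -> x k.+1 = x k) ->
  (* sigma update rule *)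
  (forall k, (eta2%:E <= rho k)%E ->
      Num.max sigma_min (gamma3 * sigma k) <= sigma k.+1 <= sigma k) ->
  (forall k, (eta1%:E <= rho k)%E -> (rho k < eta2%:E)%E ->
      sigma k <= sigma k.+1 <= gamma1 * sigma k) ->
  (forall k, (rho k < eta1%:E)%E ->
      gamma1 * sigma k <= sigma k.+1 <= gamma2 * sigma k) ->
  (* (A1) *)
  0 < L -> (forall y z, enorm (gradf y - gradf z) <= L * enorm (y - z)) ->
  proper_fun Rg -> lower_semicontinuous Rg ->
  (forall k, prox_bounded (fun u => Rg (x k + u)%R)) ->
  (* (A3) *)
  0 < kappa_m ->
  (forall k, `|f (x k + s k) - f (x k) - dotv (g k) (s k)| <= kappa_m * enorm (s k) ^+ 2) ->
  (forall k, \sum_S P S * fS (x k) S = f (x k)) ->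
  (forall k, \sum_S P S *: gS (x k) S = gradf (x k)) ->
  (* (A5) *)
  0 < lambda -> (forall k, (lambda%:E <= prox_threshold (fun u => Rg (x k + u)%R))%E) ->
  (* conclusion *)
  s t != 0 ->
  Num.max (2 * kappa_m / (1 - eta2)) lambda^-1 <= sigma t ->
  x t.+1 = x t + s t /\ sigma t.+1 <= sigma t.
Proof.
move=> f gradf fS gS F g psi m dF dpsi rho _ _ eta1_gt0 eta12 eta2_lt1 _ _ _ _ _ _
  Rg_x0_fin _ _ _ _ step_min step_inadequate accept reject sigma_very_succ _ _ _ _
  [Rg_neq_Ny _] _ _ kappa_gt0 taylor _ _ _ _ s_neq0 sigma_ge.
have Rg_fin k : Rg (x k) \is a fin_num.
  elim: k => // k Rg_xk_fin.
  have [rho_ge|rho_lt] := leP eta1%:E (rho k); last by rewrite reject.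
  rewrite accept // fin_numE Rg_neq_Ny /=; apply/eqP => Rg_pinfty.
  move: rho_ge; rewrite /rho /dpsi (rho_ratio_step_pinfty Rg_xk_fin Rg_pinfty).
  by rewrite lee_fin leNgt eta1_gt0.
have adequate_t : adequate t by apply: contraNT s_neq0 => /step_inadequate ->.
have rho_ge : (eta2%:E <= rho t)%E.
  have sigma_t_ge : 2 * kappa_m / (1 - eta2) <= sigma t.
    by move: sigma_ge; rewrite ge_max => /andP[].
  exact: (reg_model_min_very_successful (Rg_fin t) Rg_neq_Ny eta2_lt1 kappa_gt0
    s_neq0 sigma_t_ge (taylor t) (step_min t adequate_t 0)).
split; last by case/andP: (sigma_very_succ t rho_ge).
by apply: accept; rewrite (le_trans _ rho_ge) // lee_fin.
Qed.
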